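(* Let $\varphi:\Sigma_2(\mathbb{N})\to C$ be a finite coloring and $k\ge0$ an integer. Then there exist an infinite set $\mathcal{N}\subseteq\mathbb{N}$ and colors $c_0,c_1,\dots,c_k\in C$ such that for each $0\le i\le k$, $\Sigma_2(\mathcal{N}+i)\subseteq\varphi^{-1}(c_i)$.
   Context: $\mathbb{N}=\{0,1,2,\dots\}$; $\Sigma_2(S)$ denotes the set of 2-element subsets of $S$; $\mathcal{N}+i=\{n+i:n\in\mathcal{N}\}$; $C$ is a finite non-empty set. *)

From mathcomp Require Import all_boot.
Set Implicit Arguments. Unset Strict Implicit. Unset Printing Implicit Defensive.

(* Sigma_2(nat): 2-element subsets {m, n} of nat, represented canonically
   as ordered pairs (m, n) with m < n (smaller element first). *)
Definition pair2 := {p : nat * nat | p.1 < p.2}.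

Definition shift_pair (i : nat) (p : pair2) : pair2 :=
  exist (fun q : nat * nat => q.1 < q.2) ((sval p).1 + i, (sval p).2 + i)
        (etrans (ltn_add2r i _ _) (svalP p)).

Definition in_sigma2 (S : nat -> Prop) (p : pair2) : Prop :=
  S (sval p).1 /\ S (sval p).2.

Definition infinite_set (S : nat -> Prop) : Prop :=
  forall m, exists n, m <= n /\ S n.

From mathcomp Require Import all_boot.
From Stdlib Require Import Classical ClassicalEpsilon.
Set Implicit Arguments. Unset Strict Implicit.

(* Colour each pair {x, y} of naturals by the tuple (phi {x+i, y+i})_(i <= k); this is a
   finite colouring, so the infinite Ramsey theorem for pairs gives an infinite N on which
   the tuple is constant, and its i-th entry is the colour c_i. Ramsey's theorem itself is
   proved by choosing pivots x_0 < x_1 < ... where x_j sees all later pivots in a single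
   colour c_j (pigeonhole on an infinite set), then pigeonholing once more on the c_j. *)

Lemma infinite_set_fiber (D : finType) (S : nat -> Prop) (f : nat -> D) :
  infinite_set S -> exists t, infinite_set (fun y => S y /\ f y = t).
Proof.
move=> infS; apply: NNPP => no_fiber.
have /fin_all_exists [bound bound_fiber] :
    forall t : D, exists m, forall n, m <= n -> ~ (S n /\ f n = t).
  move=> t; have /not_all_ex_not [m Hm] := not_ex_all_not _ _ no_fiber t.
  by exists m => n le_mn Snt; apply: Hm; exists n.
have [n [le_n Sn]] := infS (\max_t bound t).
apply: (bound_fiber (f n) n _ (conj Sn erefl)).
exact: leq_trans (leq_bigmax (f n)) le_n.
Qed.

Lemma infinite_set_gt (S : nat -> Prop) x :
  infinite_set S -> infinite_set (fun y => S y /\ x < y).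
Proof.
move=> infS m; have [n [le_n Sn]] := infS (maxn m x.+1).
by exists n; rewrite !(leq_trans _ le_n) ?leq_maxl ?leq_maxr.
Qed.

Section InfiniteRamsey.
Variables (D : finType) (col : nat -> nat -> D).

Definition pivot (S : nat -> Prop) (t : nat * D * (nat -> Prop)) :=
  S t.1.1 /\ infinite_set t.2 /\
  forall y, t.2 y -> S y /\ t.1.1 < y /\ col t.1.1 y = t.1.2.

Lemma exists_pivot S : infinite_set S -> exists t, pivot S t.
Proof.
move=> infS; have [x [_ Sx]] := infS 0.
have [c infT] := infinite_set_fiber (col x) (infinite_set_gt x infS).
by exists (x, c, fun y => (S y /\ x < y) /\ col x y = c); split; last by split => // y [[]].
Qed.

Definition next_pivot S := epsilon (inhabits (0, col 0 0, S)) (pivot S).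

Lemma next_pivotP S : infinite_set S -> pivot S (next_pivot S).
Proof. by move=> infS; apply: epsilon_spec; apply: exists_pivot. Qed.

Definition stage j := iter j (fun S => (next_pivot S).2) (fun _ => True).

Lemma stage_pivot j :
  infinite_set (stage j) /\ pivot (stage j) (next_pivot (stage j)).
Proof.
suff inf_stage : infinite_set (stage j) by split; last exact: next_pivotP.
elim: j => [|j IH]; first by move=> m; exists m.
by have [_ [inf_next _]] := next_pivotP IH.
Qed.

Lemma stage_decr j l y : j <= l -> stage l y -> stage j y.
Proof.
elim: l => [|l IH]; first by rewrite leqn0 => /eqP->.
rewrite leq_eqVlt => /predU1P[-> //|lt_jl] Sy; apply: IH => //.
by have [_ [_ [_ /(_ y Sy) []]]] := stage_pivot l.
Qed.

Definition pivot_pt j := (next_pivot (stage j)).1.1.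
Definition pivot_col j := (next_pivot (stage j)).1.2.

Lemma pivot_pt_col j l :
  j < l -> pivot_pt j < pivot_pt l /\ col (pivot_pt j) (pivot_pt l) = pivot_col j.
Proof.
move=> lt_jl; have [_ [Sl _]] := stage_pivot l.
have [_ [_ [_ /(_ _ (stage_decr lt_jl Sl)) [] //]]] := stage_pivot j.
Qed.

Lemma pivot_pt_ge j : j <= pivot_pt j.
Proof.
elim: j => // j IH.
by apply: leq_ltn_trans IH (proj1 (pivot_pt_col (ltnSn j))).
Qed.

Theorem ramsey_pairs : exists (N : nat -> Prop) (c : D), infinite_set N /\
  forall x y, N x -> N y -> x < y -> col x y = c.
Proof.
have [c inf_c] := @infinite_set_fiber D (fun _ => True) pivot_col
  (fun m => ex_intro _ m (conj (leqnn m) I)).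
exists (fun y => exists2 j, pivot_col j = c & pivot_pt j = y), c; split.
  move=> m; have [j [le_mj [_ cj]]] := inf_c m.
  by exists (pivot_pt j); split; [exact: leq_trans (pivot_pt_ge j) | exists j].
move=> _ _ [j cj <-] [l _ <-] lt_jl.
case: (ltngtP j l) => [lt|lt|eq_jl]; first by rewrite (proj2 (pivot_pt_col lt)).
  by move: (ltn_trans lt_jl (proj1 (pivot_pt_col lt))); rewrite ltnn.
by move: lt_jl; rewrite eq_jl ltnn.
Qed.

End InfiniteRamsey.

(* The pair {x, max y (x+1)}: it is {x, y} when x < y, and a junk pair otherwise. *)
Definition mk_pair2 (x y : nat) : pair2 :=
  exist (fun q : nat * nat => q.1 < q.2) (x, maxn y x.+1) (leq_maxr y x.+1).

Lemma mk_pair2_val (p : pair2) : mk_pair2 (sval p).1 (sval p).2 = p.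
Proof. by case: p => [[m n] lt_mn]; apply: val_inj; rewrite /= (maxn_idPl lt_mn). Qed.

Theorem proposition3p1 (C : finType) (hC : 0 < #|C|) (phi : pair2 -> C) (k : nat) :
  exists (Nset : nat -> Prop) (c : 'I_k.+1 -> C),
    infinite_set Nset /\
    forall (i : 'I_k.+1) (p : pair2),
      in_sigma2 Nset p -> phi (shift_pair i p) = c i.
Proof.
pose shifted_colors x y := [ffun i : 'I_k.+1 => phi (shift_pair i (mk_pair2 x y))].
have [N [c [infN homN]]] := ramsey_pairs shifted_colors.
exists N, c; split => // i p [Np1 Np2].
have := congr1 (fun f : {ffun 'I_k.+1 -> C} => f i) (homN _ _ Np1 Np2 (svalP p)).
by rewrite ffunE mk_pair2_val.
Qed.
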